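(* Let $p\ge 3$ be an integer, $w=2\cos(\pi/p)$, and for real $S$ set $$X_S=\begin{pmatrix}0&-e^{S/2}\\ e^{-S/2}&0\end{pmatrix},\quad R=\begin{pmatrix}1&1\\-1&0\end{pmatrix},\quad L=\begin{pmatrix}0&1\\-1&-1\end{pmatrix},\quad F_p=\begin{pmatrix}0&1\\-1&-w\end{pmatrix}.$$ Let $Z\in\mathbb R$ and define $e^{Z_1}=e^Z\frac{\sin(2\pi/p)}{\sin(\pi/p)}$, $e^{Z_p}=e^Z\frac{\sin(\pi/p)}{\sin(2\pi/p)}$, $e^{Z_k}=e^Z\frac{\sin((k-1)\pi/p)}{\sin(k\pi/p)}$ for $k=2,\dots,p-1$, and $e^{Y_k}=\frac{\sin((k+1)\pi/p)}{\sin((k-1)\pi/p)}$ for $k=2,\dots,p-2$. Then $$X_ZF_pX_Z=X_{Z_1}LX_{Z_2},$$ for every $k=2,\dots,p-2$ $$X_Z(-1)^{k-1}F_p^{k}X_Z=X_{Z_1}RX_{Y_2}R\cdots RX_{Y_k}LX_{Z_{k+1}},$$ and $$X_Z(-1)^{p}F_p^{p-1}X_Z=X_{Z_1}RX_{Y_2}R\cdots RX_{Y_{p-2}}RX_{Z_p}$$ (for $p=3$ the right-hand side of the last identity is $X_{Z_1}RX_{Z_3}$). *)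

From HB Require Import structures.
From mathcomp Require Import all_boot all_order all_algebra.
From mathcomp Require Import all_classical all_reals all_analysis.
Set Implicit Arguments.
Unset Strict Implicit.
Unset Printing Implicit Defensive.
Import Order.TTheory GRing.Theory Num.Theory.
Local Open Scope ring_scope.

Section Defs.
Variable R : realType.

Definition mx2 (a b c d : R) : 'M[R]_2 :=
  \matrix_(i < 2, j < 2)
    if (i : nat) == 0%N then (if (j : nat) == 0%N then a else b)
    else (if (j : nat) == 0%N then c else d).

Definition Xmx (S : R) : 'M[R]_2 := mx2 0 (- expR (S / 2)) (expR (- (S / 2))) 0.
Definition Rmx : 'M[R]_2 := mx2 1 1 (-1) 0.
Definition Lmx : 'M[R]_2 := mx2 0 1 (-1) (-1).
Definition wp (p : nat) : R := 2 * cos (pi / p%:R).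
Definition Fmx (p : nat) : 'M[R]_2 := mx2 0 1 (-1) (- wp p).

Definition sinpi (p k : nat) : R := sin (k%:R * pi / p%:R).

Definition Z1 (p : nat) (Z : R) : R := Z + ln (sinpi p 2 / sinpi p 1).
Definition Zlast (p : nat) (Z : R) : R := Z + ln (sinpi p 1 / sinpi p 2).
Definition Zk (p : nat) (Z : R) (k : nat) : R :=
  Z + ln (sinpi p k.-1 / sinpi p k).
Definition Yk (p : nat) (k : nat) : R := ln (sinpi p k.+1 / sinpi p k.-1).

(* R X_{Y_2} R X_{Y_3} ... R X_{Y_k}  (empty product = 1 when k < 2) *)
Definition RYprod (p k : nat) : 'M[R]_2 :=
  \prod_(2 <= j < k.+1) (Rmx * Xmx (Yk p j)).

End Defs.

From Pilot Require Import Defs.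
From HB Require Import structures.
From mathcomp Require Import all_boot all_order all_algebra.
From mathcomp Require Import all_classical all_reals all_analysis.
From mathcomp Require Import ring zify.
Set Implicit Arguments.
Unset Strict Implicit.
Unset Printing Implicit Defensive.
Import Order.TTheory GRing.Theory Num.Theory.
Local Open Scope ring_scope.

(* With s_k = sin(k pi / p) we have s_0 = 0 and the Chebyshev recurrence
   s_(k+1) + s_(k-1) = w s_k, so F_p is its companion matrix and
   s_1 (-1)^(k-1) F_p^k = [[s_(k-1), s_k], [-s_k, -s_(k+1)]]; conjugation by X_Z
   only permutes and rescales these entries.  On the other side, every partial
   product X_(Z_1) R X_(Y_2) ... R X_(Y_k) has the shape [[0, -E], [1/E, -c/E]]
   with E = e^(Z/2) sqrt(s_k s_(k+1)) / s_1 and c = s_(k+1) s_(k-1) / s_1^2: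
   one more factor R X_Y telescopes E and maps c to (c + 1) e^Y, which is the
   next value by Cassini's identity s_(k+1) s_(k-1) = s_k^2 - s_1^2.  The final
   factor L X_(Z_(k+1)), resp. R X_(Z_p), then yields the same matrix as the
   left-hand side; for the latter, s_p = 0 forces s_(p-1) = s_1, s_(p-2) = s_2. *)

Section TwoByTwo.
Variable R : realType.

Lemma mx2_mul (a b c d a' b' c' d' : R) :
  mx2 a b c d * mx2 a' b' c' d' =
  mx2 (a * a' + b * c') (a * b' + b * d') (c * a' + d * c') (c * b' + d * d').
Proof.
apply/matrixP => i j; rewrite !mxE !big_ord_recl big_ord0 !mxE /=.
by move: i j => [[|[|i]] Hi] [[|[|j]] Hj] //=; rewrite ?addr0.
Qed.

Lemma mx2_scale (r a b c d : R) :
  r *: mx2 a b c d = mx2 (r * a) (r * b) (r * c) (r * d).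
Proof.
apply/matrixP => i j; rewrite !mxE /=.
by move: i j => [[|[|i]] Hi] [[|[|j]] Hj].
Qed.

Lemma pos_sqr (x : R) : 0 < x -> exists2 a, 0 < a & x = a ^+ 2.
Proof. by move=> x_gt0; exists (Num.sqrt x); rewrite ?sqrtr_gt0 ?sqr_sqrtr ?ltW. Qed.

Definition Xe (e : R) : 'M[R]_2 := mx2 0 (- e) e^-1 0.

Lemma Xmx_expR (S : R) : Xmx S = Xe (expR (S / 2)).
Proof. by rewrite /Xmx /Xe expRN. Qed.

Lemma Xmx_add_ln_sqr_div (c a b : R) : 0 < a -> 0 < b ->
  Xmx (c + ln (a ^+ 2 / b ^+ 2)) = Xe (expR (c / 2) * (a / b)).
Proof.
move=> a_gt0 b_gt0; have ab_gt0 : 0 < a / b by rewrite divr_gt0.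
rewrite Xmx_expR -expr_div_n lnXn // mulr2n !mulrDl -splitr expRD.
by rewrite lnK ?posrE.
Qed.

Lemma Xmx_ln_sqr_div (a b : R) : 0 < a -> 0 < b ->
  Xmx (ln (a ^+ 2 / b ^+ 2)) = Xe (a / b).
Proof.
by move=> a_gt0 b_gt0; rewrite -[ln _]add0r Xmx_add_ln_sqr_div // mul0r expR0 mul1r.
Qed.

Lemma Xe_sandwich (z a b c d : R) : z != 0 ->
  Xe z * mx2 a b c d * Xe z = mx2 (- d) (z ^+ 2 * c) (b / z ^+ 2) (- a).
Proof. by move=> z0; rewrite /Xe !mx2_mul; congr mx2; field. Qed.

Definition Qmx (E c : R) : 'M[R]_2 := mx2 0 (- E) E^-1 (- c / E).

Lemma Qmx0 (e : R) : Qmx e 0 = Xe e.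
Proof. by rewrite /Qmx oppr0 mul0r. Qed.

Lemma Qmx_R_Xe (E c f : R) : E != 0 -> f != 0 ->
  Qmx E c * Rmx R * Xe f = Qmx (E * f) ((c + 1) * f ^+ 2).
Proof.
by move=> E0 f0; rewrite /Qmx /Rmx /Xe !mx2_mul; congr mx2; field; rewrite ?E0 ?f0.
Qed.

Lemma Qmx_L_Xe (E c f : R) : E != 0 -> f != 0 ->
  Qmx E c * Lmx R * Xe f
  = mx2 (E / f) (- (E * f)) ((c + 1) / (E * f)) (- (c * f / E)).
Proof.
by move=> E0 f0; rewrite /Qmx /Lmx /Xe !mx2_mul; congr mx2; field; rewrite ?E0 ?f0.
Qed.

End TwoByTwo.

Section ChebyshevSequence.
Variables (R : realType) (w : R) (u : nat -> R).
Hypothesis u0 : u 0 = 0.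
Hypothesis uSS : forall n, u n.+2 + u n = w * u n.+1.

Lemma cassini n : u n.+2 * u n = u n.+1 ^+ 2 - u 1 ^+ 2.
Proof.
elim: n => [|n IH]; first by rewrite u0 mulr0 subrr.
have -> : u 1 ^+ 2 = u n.+1 ^+ 2 - u n.+2 * u n by rewrite IH; ring.
have -> : u n.+3 = w * u n.+2 - u n.+1 by rewrite -uSS addrK.
have -> : u n = w * u n.+1 - u n.+2 by rewrite -uSS addrC addKr.
ring.
Qed.

Lemma companion_pow n :
  u 1 *: ((-1) ^+ n *: mx2 0 1 (-1) (- w) ^+ n.+1)
  = mx2 (u n) (u n.+1) (- u n.+1) (- u n.+2).
Proof.
have u2 : u 2 = w * u 1 by rewrite -uSS u0 addr0.
elim: n => [|n IH].
  by rewrite expr0 scale1r expr1 mx2_scale u0 u2; congr mx2; ring.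
set F := mx2 0 1 (-1) (- w) in IH *.
have -> : u 1 *: ((-1) ^+ n.+1 *: F ^+ n.+2)
          = u 1 *: ((-1) ^+ n *: F ^+ n.+1) * - F.
  by rewrite exprSr [F ^+ _]exprSr -scalerA scaleN1r mulrN !scalerN -!scalerAl.
have -> : - F = mx2 0 (-1) 1 w by rewrite -scaleN1r mx2_scale; congr mx2; ring.
rewrite IH mx2_mul.
have -> : u n.+3 = w * u n.+2 - u n.+1 by rewrite -uSS addrK.
have -> : u n.+2 = w * u n.+1 - u n by rewrite -uSS addrK.
by congr mx2; ring.
Qed.

Variable N : nat.
Hypothesis u_gt0 : forall j, (0 < j < N)%N -> 0 < u j.
Variable Z : R.
Local Notation z := (expR (Z / 2)).

Definition RXprod k := \prod_(2 <= j < k.+1) (Rmx R * Xmx (ln (u j.+1 / u j.-1))).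

Lemma u_sqr j : (0 < j < N)%N -> exists2 a, 0 < a & u j = a ^+ 2.
Proof. by move=> jN; apply: pos_sqr; apply: u_gt0. Qed.

Lemma Xmx_Z1_RXprod n : (n.+2 < N)%N ->
  Xmx (Z + ln (u 2 / u 1)) * RXprod n.+1
  = Qmx (z * Num.sqrt (u n.+1) * Num.sqrt (u n.+2) / u 1) (u n.+2 * u n / u 1 ^+ 2).
Proof.
have z0 : z != 0 by rewrite gt_eqF ?expR_gt0.
elim: n => [|n IH] nN.
  rewrite /RXprod big_geq // mulr1 u0 mulr0 mul0r Qmx0.
  have /u_sqr[a a_gt0 ->] : (0 < 1 < N)%N by lia.
  have /u_sqr[b b_gt0 ->] : (0 < 2 < N)%N by lia.
  rewrite Xmx_add_ln_sqr_div // !sqrtr_sqr !gtr0_norm //.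
  by congr Xe; field; rewrite gt_eqF.
rewrite /RXprod big_nat_recr //= mulrA -/(RXprod n.+1) IH; last by lia.
rewrite cassini.
have /u_gt0 u1_gt0 : (0 < 1 < N)%N by lia.
have /u_sqr[a a_gt0 ->] : (0 < n.+1 < N)%N by lia.
have /u_sqr[b b_gt0 ->] : (0 < n.+2 < N)%N by lia.
have /u_sqr[d d_gt0 ->] : (0 < n.+3 < N)%N by lia.
rewrite Xmx_ln_sqr_div // !sqrtr_sqr !gtr0_norm // mulrA Qmx_R_Xe.
- by congr Qmx; field; rewrite ?gt_eqF.
- by rewrite gt_eqF ?mulr_gt0 ?invr_gt0 ?expR_gt0.
- by rewrite gt_eqF ?mulr_gt0 ?invr_gt0 ?expR_gt0.
Qed.

Lemma Xmx_sandwich_companion_pow n : (n.+2 < N)%N ->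
  Xmx Z * ((-1) ^+ n *: mx2 0 1 (-1) (- w) ^+ n.+1) * Xmx Z
  = Xmx (Z + ln (u 2 / u 1)) * RXprod n.+1 * Lmx R * Xmx (Z + ln (u n.+1 / u n.+2)).
Proof.
move=> nN.
have z_gt0 : 0 < z := expR_gt0 _.
have /u_gt0 u1_gt0 : (0 < 1 < N)%N by lia.
have -> : (-1) ^+ n *: mx2 0 1 (-1) (- w) ^+ n.+1
          = (u 1)^-1 *: mx2 (u n) (u n.+1) (- u n.+1) (- u n.+2).
  by rewrite -companion_pow scalerA mulVf ?scale1r ?gt_eqF.
have un : u n = (u n.+1 ^+ 2 - u 1 ^+ 2) / u n.+2.
  by rewrite -cassini mulrAC divff ?mul1r // gt_eqF //; apply: u_gt0; lia.
rewrite Xmx_Z1_RXprod // un.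
have /u_sqr[a a_gt0 ->] : (0 < n.+1 < N)%N by lia.
have /u_sqr[b b_gt0 ->] : (0 < n.+2 < N)%N by lia.
rewrite Xmx_add_ln_sqr_div // !sqrtr_sqr !gtr0_norm // Xmx_expR.
rewrite -scalerAr -scalerAl Xe_sandwich ?gt_eqF // mx2_scale Qmx_L_Xe.
- by congr mx2; field; rewrite ?gt_eqF.
- by rewrite gt_eqF ?mulr_gt0 ?invr_gt0 ?expR_gt0.
- by rewrite gt_eqF ?mulr_gt0 ?invr_gt0 ?expR_gt0.
Qed.

Lemma u_sym_before_zero n : (n.+2 < N)%N -> u n.+3 = 0 -> u n.+2 = u 1 /\ u n.+1 = u 2.
Proof.
move=> nN uN.
have sym1 : u n.+2 = u 1.
  have /u_gt0 u1_gt0 : (0 < 1 < N)%N by lia.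
  have /u_gt0 un2_gt0 : (0 < n.+2 < N)%N by lia.
  apply/eqP; rewrite -(eqrXn2 (n := 2)) ?ltW //.
  by rewrite -subr_eq0 -cassini uN mul0r.
split=> //.
by rewrite -[u n.+1]add0r -uN uSS sym1 -(uSS 0) u0 addr0.
Qed.

Lemma Xmx_sandwich_companion_pow_last n : (n.+2 < N)%N -> u n.+3 = 0 ->
  Xmx Z * ((-1) ^+ n.+1 *: mx2 0 1 (-1) (- w) ^+ n.+2) * Xmx Z
  = Xmx (Z + ln (u 2 / u 1)) * RXprod n.+1 * Rmx R * Xmx (Z + ln (u 1 / u 2)).
Proof.
move=> nN uN; have [sym1 sym2] := u_sym_before_zero nN uN.
have z_gt0 : 0 < z := expR_gt0 _.
have -> : (-1) ^+ n.+1 *: mx2 0 1 (-1) (- w) ^+ n.+2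
          = (u 1)^-1 *: mx2 (u n.+1) (u n.+2) (- u n.+2) (- u n.+3).
  by rewrite -companion_pow scalerA mulVf ?scale1r // gt_eqF //; apply: u_gt0; lia.
rewrite Xmx_Z1_RXprod // cassini uN sym1 sym2.
have /u_sqr[a a_gt0 ->] : (0 < 1 < N)%N by lia.
have /u_sqr[b b_gt0 ->] : (0 < 2 < N)%N by lia.
rewrite Xmx_add_ln_sqr_div // !sqrtr_sqr !gtr0_norm // Xmx_expR.
rewrite -scalerAr -scalerAl Xe_sandwich ?gt_eqF // mx2_scale Qmx_R_Xe.
- by rewrite /Qmx; congr mx2; field; rewrite ?gt_eqF.
- by rewrite gt_eqF ?mulr_gt0 ?invr_gt0 ?exprn_gt0 ?expR_gt0.
- by rewrite gt_eqF ?mulr_gt0 ?invr_gt0 ?exprn_gt0 ?expR_gt0.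
Qed.

End ChebyshevSequence.

Section SinPi.
Variables (R : realType) (p : nat).
Local Notation s := (Defs.sinpi R p).

Lemma sinpi_0 : s 0 = 0.
Proof. by rewrite /Defs.sinpi !mul0r sin0. Qed.

Lemma sinpiSS n : s n.+2 + s n = wp R p * s n.+1.
Proof.
pose x : R := pi / p%:R.
have sE k : s k = sin (k%:R * x) by rewrite /Defs.sinpi mulrA.
have -> : s n.+2 = sin (n.+1%:R * x + x) by rewrite sE -natr1 mulrDl mul1r.
have -> : s n = sin (n.+1%:R * x - x) by rewrite sE -natr1 mulrDl mul1r addrK.
by rewrite sE sinD sinB /wp -/x; ring.
Qed.

Lemma sinpi_gt0 k : (0 < k < p)%N -> 0 < s k.
Proof.
case/andP=> k_gt0 kp; have p_gt0 : (0 < p%:R :> R) by rewrite ltr0n; lia.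
rewrite /Defs.sinpi; apply: sin_gt0_pi; apply/andP; split.
  by rewrite divr_gt0 // mulr_gt0 ?pi_gt0 // ltr0n.
by rewrite ltr_pdivrMr // mulrC ltr_pM2l ?pi_gt0 // ltr_nat.
Qed.

Lemma sinpi_p : (0 < p)%N -> s p = 0.
Proof.
move=> p_gt0; rewrite /Defs.sinpi mulrAC divff ?mul1r ?sinpi //.
by rewrite pnatr_eq0 -lt0n.
Qed.

End SinPi.

Theorem mainTheorem3 (R : realType) (p : nat) (hp : (3 <= p)%N) (Z : R) :
  [/\ Xmx Z * Fmx R p * Xmx Z = Xmx (Z1 p Z) * Lmx R * Xmx (Zk p Z 2),
      (forall k : nat, (2 <= k)%N -> (k <= p - 2)%N ->
         Xmx Z * ((-1) ^+ k.-1 *: Fmx R p ^+ k) * Xmx Z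
         = Xmx (Z1 p Z) * RYprod R p k * Lmx R * Xmx (Zk p Z k.+1))
    & Xmx Z * ((-1) ^+ p *: Fmx R p ^+ p.-1) * Xmx Z
      = Xmx (Z1 p Z) * RYprod R p (p - 2) * Rmx R * Xmx (Zlast p Z)].
Proof.
have [n ->] : exists n, p = n.+3 by exists (p - 3)%N; lia.
have s0 := sinpi_0 R n.+3; have sSS := sinpiSS R n.+3.
have s_gt0 := @sinpi_gt0 R n.+3.
split.
- have := Xmx_sandwich_companion_pow s0 sSS s_gt0 Z (n := 0) isT.
  by rewrite expr0 scale1r expr1 /RXprod big_geq // mulr1.
- by move=> [|k] // k_ge2 kp; apply: (Xmx_sandwich_companion_pow s0 sSS s_gt0); lia.
- have -> : (-1) ^+ n.+3 = (-1) ^+ n.+1 :> R by rewrite 2!exprS mulN1r mulN1r opprK.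
  have := Xmx_sandwich_companion_pow_last s0 sSS s_gt0 Z (ltnSn n.+2) (@sinpi_p R n.+3 isT).
  exact.
Qed.
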